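(* There is an absolute constant $c>0$ such that for infinitely many $n$ there exist integers $b_1,\dots,b_n\ge 0$ with $b_1+\dots+b_n=n-1$ such that $(b_1,\dots,b_n)$-BG has an equilibrium graph in the MAX version with diameter at least $cn$.
   Context: Bounded budget network creation game $(b_1,\dots,b_n)$-BG: $n$ players with integer budgets $0\le b_i\le n-1$. A strategy of player $i$ is a set $S_i\subseteq\{1,\dots,n\}\setminus\{i\}$ with $|S_i|=b_i$; a profile is realized by the directed graph $G$ on $u_1,\dots,u_n$ with an arc $\overrightarrow{u_iu_j}$ iff $j\in S_i$. $U(G)$ is the undirected multigraph obtained by ignoring directions; $\operatorname{dist}(u,v)$ is the distance in $U(G)$, defined as $n^2$ between different components. MAX cost: $c_{MAX}(u)=\max_v\operatorname{dist}(u,v)+(\kappa-1)n^2$, $\kappa$ the number of components of $U(G)$. An equilibrium graph in the MAX version is a realization in which no vertex can decrease its MAX cost by changing its own strategy while the other strategies are fixed. The diameter is the maximum distance between two vertices. *)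

From Stdlib Require Import Reals.
From mathcomp Require Import all_boot all_order.
Set Implicit Arguments. Unset Strict Implicit. Unset Printing Implicit Defensive.

(* Bounded budget network creation game on n players u_0,...,u_{n-1}
   (indexed by 'I_n).  A profile assigns to each player i a set S i of
   out-neighbours (its strategy). *)
Section BG.
Variable n : nat.
Definition profile := 'I_n -> {set 'I_n}.

Definition valid_profile (b : 'I_n -> nat) (S : profile) : Prop :=
  forall i, i \notin S i /\ #|S i| = b i.

Definition adj (S : profile) : rel 'I_n :=
  fun u v => (v \in S u) || (u \in S v).

Fixpoint ball (S : profile) (k : nat) (u : 'I_n) : {set 'I_n} :=
  match k with
  | 0 => [set u]
  | k'.+1 => ball S k' u :|: [set v | [exists w in ball S k' u, adj S w v]]
  end.

(* distance in U(G); n^2 between vertices of different components *)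
Definition dist (S : profile) (u v : 'I_n) : nat :=
  let k := find (fun k => v \in ball S k u) (iota 0 n) in
  if k < n then k else n ^ 2.

Definition ncomp (S : profile) : nat := n_comp (adj S) [set: 'I_n].

Definition cost_max (S : profile) (u : 'I_n) : nat :=
  \max_(v : 'I_n) dist S u v + (ncomp S - 1) * n ^ 2.

Definition deviate (S : profile) (i : 'I_n) (T : {set 'I_n}) : profile :=
  fun j => if j == i then T else S j.

Definition max_equilibrium (b : 'I_n -> nat) (S : profile) : Prop :=
  valid_profile b S /\
  forall (i : 'I_n) (T : {set 'I_n}), i \notin T -> #|T| = b i ->
    cost_max S i <= cost_max (deviate S i T) i.

Definition diameter (S : profile) : nat :=
  \max_(u : 'I_n) \max_(v : 'I_n) dist S u v.
End BG.

(* The equilibrium graph is a spider: a centre L with three legs of L vertices,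
   so n = 3L + 1 and its 3L = n - 1 edges are the arcs.  Vertices 1..L point to
   their left neighbour, L..2L-1 to their right neighbour, 2L+1 to the centre and
   2L+1..3L-1 to their successor; the diameter is 2L, about 2n/3.
   In a tree the MAX cost of a vertex i is its eccentricity.  A deviation of i is
   ruled out by a potential f with f i = 0, 1-Lipschitz across the arcs of the
   other players and at most 1 on the new targets of i: it is then 1-Lipschitz in
   the new graph, so distances from i dominate f, and f reaches the eccentricity
   of i somewhere. *)

From Pilot Require Import Defs.
From mathcomp Require Import all_boot all_order zify.
From Stdlib Require Import Reals Lra FunctionalExtensionality.
Set Implicit Arguments. Unset Strict Implicit. Unset Printing Implicit Defensive.

Section Distances.
Variable n : nat.
Implicit Types (S : profile n) (u v x y : 'I_n) (f g : 'I_n -> nat).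

Definition lipschitz S f := forall x y, adj S x y -> f y <= f x + 1.

Lemma adj_sym S : symmetric (adj S).
Proof. by move=> x y; rewrite /adj orbC. Qed.

Lemma lipschitz_of_arcs S f :
  (forall x y, y \in S x -> f y <= f x + 1 /\ f x <= f y + 1) -> lipschitz S f.
Proof. by move=> hf x y /orP[/hf | /hf]; lia. Qed.

Lemma lipschitz_mem_ball S f u k x :
  lipschitz S f -> x \in ball S k u -> f x <= f u + k.
Proof.
move=> hf; elim: k x => [|k IH] x /=; first by rewrite inE => /eqP ->; rewrite addn0.
rewrite in_setU => /orP[/IH | ]; first lia.
rewrite inE => /existsP[w /andP[/IH hw /hf hwx]]; lia.
Qed.

Lemma mem_ball_descent S g u :
  (forall x, g x = 0 -> x = u) ->
  (forall x, 0 < g x -> exists2 y, adj S y x & g y < g x) ->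
  forall k x, g x <= k -> x \in ball S k u.
Proof.
move=> g0 g_desc; elim=> [|k IH] x gx /=; first by rewrite inE (g0 x) //; lia.
rewrite in_setU; have [x0 | x_pos] := posnP (g x).
  by rewrite IH // x0.
have [y yx gy] := g_desc x x_pos.
by rewrite inE; apply/orP; right; apply/existsP; exists y; rewrite yx IH //; lia.
Qed.

Lemma dist_ge_lipschitz S f u v e :
  lipschitz S f -> f u = 0 -> e <= f v -> e <= expn n 2 -> e <= Defs.dist S u v.
Proof.
move=> hf fu fv en; rewrite /Defs.dist; case: ifP => [k_lt | _]; last exact: en.
have := nth_find 0 (a := fun k => v \in ball S k u) (s := iota 0 n).
rewrite has_find size_iota => /(_ k_lt); rewrite nth_iota // add0n.
by move=> /(lipschitz_mem_ball hf); lia.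
Qed.

Lemma dist_le_ball S u v k : v \in ball S k u -> k < n -> Defs.dist S u v <= k.
Proof.
move=> vk k_lt; rewrite /Defs.dist.
have : find (fun k => v \in ball S k u) (iota 0 n) <= k.
  by rewrite leqNgt; apply/negP => /(before_find 0); rewrite nth_iota // add0n vk.
by move=> find_le; rewrite ifT ?(leq_ltn_trans find_le).
Qed.

Lemma connect_mem_ball S k u x : x \in ball S k u -> connect (adj S) u x.
Proof.
elim: k x => [|k IH] x /=; first by rewrite inE => /eqP ->.
rewrite in_setU => /orP[/IH // | ].
by rewrite inE => /existsP[w /andP[/IH uw wx]]; apply: connect_trans uw (connect1 wx).
Qed.

Lemma ncomp_eq1 S u : (forall x, exists k, x \in ball S k u) -> ncomp S = 1.
Proof.
move=> ball_all; rewrite /ncomp -(n_comp_connect (sym_connect_sym (adj_sym S)) u).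
apply: eq_n_comp_r => x; have [k xk] := ball_all x.
by rewrite inE; symmetry; exact: connect_mem_ball xk.
Qed.

Lemma cost_max_le S u e : (forall x, exists k, x \in ball S k u) ->
  (forall v, Defs.dist S u v <= e) -> cost_max S u <= e.
Proof.
move=> ball_all dist_le; rewrite /cost_max (ncomp_eq1 ball_all) subnn mul0n addn0.
exact/bigmax_leqP.
Qed.

Lemma dist_le_cost_max S u v : Defs.dist S u v <= cost_max S u.
Proof. exact: leq_trans (leq_bigmax v) (leq_addr _ _). Qed.

Lemma dist_le_diameter S u v : Defs.dist S u v <= diameter S.
Proof.
exact: leq_trans (leq_bigmax (F := fun v => Defs.dist S u v) v)
                 (leq_bigmax (F := fun u => \max_v Defs.dist S u v) u).
Qed.

Lemma deviate_id S i : deviate S i (S i) = S.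
Proof. by apply: functional_extensionality => j; rewrite /deviate; case: eqP => [->|]. Qed.

End Distances.

Lemma nseq_bool (T : Type) (b : bool) (x : T) : nseq b x = if b then [:: x] else [::].
Proof. by case: b. Qed.

Lemma card_set_val_mem m (s : seq nat) : uniq s -> all (fun k => k < m) s ->
  #|[set x : 'I_m | val x \in s]| = size s.
Proof.
elim: s => [|k s IH] /=; first by move=> _ _; apply: eq_card0 => x; rewrite inE.
move=> /andP[ks s_uniq] /andP[km s_lt].
have -> : [set x : 'I_m | val x \in k :: s] = Ordinal km |: [set x | val x \in s].
  by apply/setP => x; rewrite !inE -val_eqE.
by rewrite cardsU1 IH // inE /= ks.
Qed.

Lemma sum_nat_interval m lo hi : lo <= hi ->
  \sum_(0 <= i < m) (lo <= i < hi : nat) = minn hi m - minn lo m.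
Proof.
move=> lo_hi; elim: m => [|m IH]; first by rewrite big_geq //; lia.
by rewrite big_nat_recr //= IH; lia.
Qed.

Section Spider.
Variable L : nat.
Hypothesis L_ge2 : 2 <= L.
Local Notation N := (3 * L).+1.

Definition spider_targets (u : nat) : seq nat :=
  nseq (1 <= u < L + 1) (u - 1) ++ nseq (L <= u < 2 * L) (u + 1) ++
  nseq (2 * L + 1 <= u < 2 * L + 2) L ++ nseq (2 * L + 1 <= u < 3 * L) (u + 1).

Definition spider_arc (u w : nat) : bool :=
  [|| (1 <= u < L + 1) && (w == u - 1), (L <= u < 2 * L) && (w == u + 1),
      (2 * L + 1 <= u < 2 * L + 2) && (w == L) | (2 * L + 1 <= u < 3 * L) && (w == u + 1)].

Definition spider : profile N := fun u => [set w | val w \in spider_targets u].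

Definition spider_budget (u : 'I_N) : nat := size (spider_targets u).

Lemma mem_spider_targets u w : (w \in spider_targets u) = spider_arc u w.
Proof. by rewrite /spider_targets !mem_cat !mem_nseq !lt0b. Qed.

Lemma mem_spider u w : (w \in spider u) = spider_arc u w.
Proof. by rewrite inE mem_spider_targets. Qed.

Lemma size_spider_targets u : size (spider_targets u) =
  (1 <= u < L + 1 : nat) + (L <= u < 2 * L : nat) +
  (2 * L + 1 <= u < 2 * L + 2 : nat) + (2 * L + 1 <= u < 3 * L : nat).
Proof. by rewrite /spider_targets !size_cat !size_nseq !addnA. Qed.

Lemma card_spider u : #|spider u| = spider_budget u.
Proof.
have u_lt := ltn_ord u; apply: card_set_val_mem.
  by rewrite /spider_targets !nseq_bool; repeat case: ifP => ?; rewrite /= ?inE ?andbT; lia.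
by rewrite /spider_targets !nseq_bool; repeat case: ifP => ?; rewrite /= ?andbT; lia.
Qed.

Lemma spider_budget_le u : spider_budget u <= N - 1.
Proof. by rewrite /spider_budget size_spider_targets; lia. Qed.

Lemma sum_spider_budget : \sum_(u < N) spider_budget u = N - 1.
Proof.
rewrite -(big_mkord xpredT (fun u => size (spider_targets u))).
under eq_bigr do rewrite size_spider_targets.
by rewrite !big_split /= !sum_nat_interval; lia.
Qed.

Definition absdiff (a b : nat) : nat := (a - b) + (b - a).

(* Vertices 0..2L form a path through the centre L; the third leg 2L+1..3L hangs from L. *)
Definition spider_dist (x y : nat) : nat :=
  if (x <= 2 * L) && (y <= 2 * L) then absdiff x y
  else if (2 * L < x) && (2 * L < y) then absdiff x y
  else if x <= 2 * L then absdiff x L + (y - 2 * L) else absdiff y L + (x - 2 * L).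

Definition ecc (x : nat) : nat := if x <= 2 * L then maxn x (2 * L - x) else x - L.

Definition step_toward (i x : nat) : nat :=
  if x <= 2 * L then
    if i <= 2 * L then (if x < i then x + 1 else x - 1)
    else if x == L then 2 * L + 1 else if x < L then x + 1 else x - 1
  else if 2 * L < i then (if x < i then x + 1 else x - 1)
  else if x == 2 * L + 1 then L else x - 1.

Lemma step_toward_lt i x : i < N -> x < N -> step_toward i x < N.
Proof. by rewrite /step_toward; repeat case: ifP => ?; lia. Qed.

Lemma step_toward_adj i x : i < N -> x < N -> i != x ->
  spider_arc (step_toward i x) x || spider_arc x (step_toward i x).
Proof. by rewrite /step_toward /spider_arc; repeat case: ifP => ?; lia. Qed.

Lemma spider_dist_step_toward i x : i < N -> x < N -> 0 < spider_dist i x ->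
  spider_dist i (step_toward i x) < spider_dist i x.
Proof.
rewrite /step_toward; repeat case: ifP => ?;
  by rewrite /spider_dist /absdiff; repeat case: ifP => ?; lia.
Qed.

Lemma spider_dist_eq0 i x : (spider_dist i x == 0) = (i == x).
Proof. by rewrite /spider_dist /absdiff; repeat case: ifP => ?; lia. Qed.

Lemma spider_dist_le_ecc i x : i < N -> x < N -> spider_dist i x <= ecc i.
Proof. by rewrite /spider_dist /absdiff /ecc; repeat case: ifP => ?; lia. Qed.

Lemma ecc_lt i : i < N -> ecc i < N.
Proof. by rewrite /ecc; repeat case: ifP => ?; lia. Qed.

Lemma mem_ball_spider_dist (i x : 'I_N) : x \in ball spider (spider_dist i x) i.
Proof.
apply: (mem_ball_descent (g := fun x : 'I_N => spider_dist i x)) => //.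
  by move=> y /eqP; rewrite spider_dist_eq0 => /eqP /val_inj.
move=> y dist_pos; have [i_lt y_lt] := (ltn_ord i, ltn_ord y).
have i_neq_y : val i != val y by rewrite -spider_dist_eq0 -lt0n.
exists (inord (step_toward i y));
  last by rewrite inordK ?step_toward_lt ?spider_dist_step_toward.
by rewrite /adj !mem_spider inordK ?step_toward_lt ?step_toward_adj.
Qed.

Lemma cost_max_spider_le (i : 'I_N) : cost_max spider i <= ecc i.
Proof.
apply: cost_max_le => [x | v]; first by exists (spider_dist i x); exact: mem_ball_spider_dist.
apply: leq_trans (dist_le_ball (mem_ball_spider_dist i v) _) _.
  exact: leq_ltn_trans (spider_dist_le_ecc (ltn_ord i) (ltn_ord v)) (ecc_lt (ltn_ord i)).
exact: spider_dist_le_ecc.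
Qed.

Lemma ecc_le_cost_deviate (i : 'I_N) (T : {set 'I_N}) (f : nat -> nat) (v : nat) :
  v < N -> f i = 0 -> ecc i <= f v ->
  (forall u w, u < N -> w < N -> u != i :> nat -> spider_arc u w ->
     f w <= f u + 1 /\ f u <= f w + 1) ->
  (forall w : 'I_N, w \in T -> f w <= 1) ->
  ecc i <= cost_max (deviate spider i T) i.
Proof.
move=> v_lt fi ecc_v f_arc f_T; apply: leq_trans (dist_le_cost_max _ _ (inord v)).
apply: (dist_ge_lipschitz (f := fun x : 'I_N => f x)) => //.
- apply: lipschitz_of_arcs => x y; rewrite /deviate; case: eqP => [-> /f_T | /eqP x_neq_i].
    by rewrite fi; lia.
  by rewrite mem_spider; apply: f_arc.
- by rewrite inordK.
- by apply: leq_trans (ltnW (ecc_lt (ltn_ord i))) _; rewrite leq_pmull.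
Qed.

Ltac solve_ecc := rewrite /ecc /=; repeat case: ifP => ?; lia.
Ltac solve_arcs := move=> ? ? ? ? ?; rewrite /spider_arc /=; move=> ?;
  repeat case: ifP => ?; split; lia.
Ltac solve_targets := move=> ?; rewrite !inE;
  first [case/orP => /eqP -> | move=> /eqP ->]; rewrite /=; repeat case: ifP => ?; lia.
Ltac by_potential pot far :=
  apply: (@ecc_le_cost_deviate _ _ pot far);
  rewrite ?/absdiff; [lia | solve_ecc | solve_ecc | solve_arcs | solve_targets].

Lemma ecc_le_cost_left_leg (i w : 'I_N) : 1 <= i < L ->
  ecc i <= cost_max (deviate spider i [set w]) i.
Proof.
move=> i_range; case: (ltnP w i) => w_i.
- by_potential (fun u => if u <= 2 * L then u - i else (L - i) + (u - 2 * L)) (2 * L).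
- by_potential (fun u => if u < i then 2 * L - i else 0) 0.
Qed.

Lemma ecc_le_cost_right_leg (i w : 'I_N) : L < i < 2 * L ->
  ecc i <= cost_max (deviate spider i [set w]) i.
Proof.
move=> i_range; have [w_beyond | w_not_beyond] := boolP (i < w <= 2 * L).
- by_potential (fun u => if u <= 2 * L then i - u else (i - L) + (u - 2 * L)) 0.
- by_potential (fun u => if i < u <= 2 * L then nat_of_ord i else 0) (2 * L).
Qed.

Lemma ecc_le_cost_third_leg (i w : 'I_N) : 2 * L + 2 <= i < 3 * L ->
  ecc i <= cost_max (deviate spider i [set w]) i.
Proof.
move=> i_range; case: (ltnP i w) => i_w.
- by_potential (fun u => if u <= 2 * L then (i - 2 * L) + absdiff u L else i - u) 0.
- by_potential (fun u => if i < u then i - L else 0) (3 * L).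
Qed.

Lemma ecc_le_cost_centre (i w1 w2 : 'I_N) : i = L :> nat ->
  ecc i <= cost_max (deviate spider i [set w1; w2]) i.
Proof.
move=> i_centre; have [both_right | not_both_right] := boolP ((L <= w1) && (L <= w2)).
  by_potential (fun u => if u < L then L else 0) 0.
have [none_right | some_right] := boolP (~~ (L < w1 <= 2 * L) && ~~ (L < w2 <= 2 * L)).
  by_potential (fun u => if L < u <= 2 * L then L else 0) (2 * L).
by_potential (fun u => if u <= 2 * L then 0 else u - 2 * L) (3 * L).
Qed.

Lemma ecc_le_cost_third_leg_base_split (i p q : 'I_N) :
  i = 2 * L + 1 :> nat -> p <= 2 * L -> 2 * L + 2 <= q ->
  ecc i <= cost_max (deviate spider i [set p; q]) i.
Proof.
move=> i_base p_le q_ge; case: (leqP p L) => p_L.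
- by_potential (fun u => if u <= 2 * L then 1 + absdiff u p else 0) (2 * L).
- by_potential (fun u => if u <= 2 * L then 1 + absdiff u p else 0) 0.
Qed.

Lemma ecc_le_cost_third_leg_base (i w1 w2 : 'I_N) :
  i = 2 * L + 1 :> nat -> w1 != i -> w2 != i ->
  ecc i <= cost_max (deviate spider i [set w1; w2]) i.
Proof.
move=> i_base w1_i w2_i.
have [both_third | not_both_third] := boolP ((2 * L < w1) && (2 * L < w2)).
  by_potential (fun u => if u <= 2 * L then L + 1 else 0) 0.
have [none_beyond | some_beyond] := boolP ((w1 < 2 * L + 2) && (w2 < 2 * L + 2)).
  by_potential (fun u => if 2 * L + 2 <= u then L + 1 else 0) (3 * L).
have [w1_i' w2_i'] : w1 != i :> nat /\ w2 != i :> nat by [].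
case: (leqP w1 (2 * L)) => w1_le; last rewrite setUC;
  by apply: ecc_le_cost_third_leg_base_split => //; lia.
Qed.

Lemma ecc_le_cost_spider_deviate (i : 'I_N) (T : {set 'I_N}) :
  i \notin T -> #|T| = spider_budget i -> 0 < spider_budget i ->
  ecc i <= cost_max (deviate spider i T) i.
Proof.
rewrite /spider_budget size_spider_targets => iT cardT budget_pos.
have i_lt := ltn_ord i.
case: (ltnP i L) => [i_lt_L | i_ge_L].
  have /cards1P[w ->] : #|T| == 1 by apply/eqP; lia.
  by apply: ecc_le_cost_left_leg; lia.
have [i_centre | i_not_centre] := eqVneq (nat_of_ord i) L.
  have /cards2P[w1 [w2 [_ ->]]] : #|T| == 2 by apply/eqP; lia.
  exact: ecc_le_cost_centre.
case: (ltnP i (2 * L)) => [i_lt_2L | i_ge_2L].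
  have /cards1P[w ->] : #|T| == 1 by apply/eqP; lia.
  by apply: ecc_le_cost_right_leg; lia.
have [i_base | i_not_base] := eqVneq (nat_of_ord i) (2 * L + 1).
  have /cards2P[w1 [w2 [_ T_def]]] : #|T| == 2 by apply/eqP; lia.
  move: iT; rewrite T_def !inE negb_or => /andP[iw1 iw2].
  by apply: ecc_le_cost_third_leg_base; rewrite // eq_sym.
have /cards1P[w ->] : #|T| == 1 by apply/eqP; lia.
by apply: ecc_le_cost_third_leg; lia.
Qed.

Lemma spider_max_equilibrium : max_equilibrium spider_budget spider.
Proof.
split=> [i | i T iT cardT]; first by rewrite mem_spider card_spider /spider_arc; split => //; lia.
have [budget0 | budget_pos] := posnP (spider_budget i).
  have T0 : T = set0 by apply: cards0_eq; rewrite cardT.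
  have spider0 : spider i = set0 by apply: cards0_eq; rewrite card_spider.
  by rewrite T0 -spider0 deviate_id.
exact: leq_trans (cost_max_spider_le i) (ecc_le_cost_spider_deviate iT cardT budget_pos).
Qed.

Lemma spider_diameter_ge : 2 * L <= diameter spider.
Proof.
have [zero_lt two_L_lt] : 0 < N /\ 2 * L < N by split; lia.
apply: leq_trans (dist_le_diameter _ (Ordinal zero_lt) (Ordinal two_L_lt)).
apply: (dist_ge_lipschitz (f := fun x : 'I_N => spider_dist 0 x)) => //.
- apply: lipschitz_of_arcs => x y; rewrite mem_spider /spider_arc /spider_dist /absdiff.
  by have := ltn_ord x; have := ltn_ord y; repeat case: ifP => ?; lia.
- by rewrite /spider_dist /absdiff /= leqnn; lia.
- by apply: leq_trans (ltnW two_L_lt) _; rewrite leq_pmull.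
Qed.
End Spider.

Theorem mainTheorem3 :
  exists c : R, (0 < c)%R /\
    forall N : nat, exists n : nat, (N <= n)%N /\
      exists b : 'I_n -> nat,
        (forall i, b i <= n - 1)%N /\
        (\sum_(i < n) b i)%N = (n - 1)%N /\
        exists S : profile n,
          max_equilibrium b S /\ (c * INR n <= INR (diameter S))%R.
Proof.
exists (1 / 2)%R; split; first lra.
move=> N; pose L := N + 2; have L_ge2 : 2 <= L by lia.
exists (3 * L).+1; split; first lia.
exists (@spider_budget L); split; first exact: spider_budget_le.
split; first exact: sum_spider_budget.
exists (@spider L); split; first exact: spider_max_equilibrium.
set d := diameter _.
have L_ge : (INR 2 <= INR L)%R by apply/le_INR/leP.
have d_ge : (INR 2 * INR L <= INR d)%R.
  by rewrite -mult_INR multE; apply/le_INR/leP/spider_diameter_ge.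
rewrite S_INR -multE mult_INR; move: L_ge d_ge => /=; lra.
Qed.
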